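(* Let $\alpha: I\to M$ be a unit-speed curve on an oriented surface $M\subset E^3$ with Darboux frame $\{T,V,U\}$ and curvatures $k_g,k_n,\tau_g$. Consider the curve $\gamma$ defined in either of the following two cases: (a) $k_g\equiv0$, $c_{10},c_{11}$ real constants, and $\gamma(s)=\alpha(s)+(c_{10}-s)T(s)+c_{11}V(s)$; (b) $k_g$ nowhere zero, $\theta$ an antiderivative of $k_g$, $S$ and $C$ antiderivatives of $\sin\theta$ and $\cos\theta$ respectively, $c_{12},c_{13}$ real constants, $$y_2=c_{12}\cos\theta+c_{13}\sin\theta-S\cos\theta+C\sin\theta,\qquad y_1=-\sin\theta\,(S-c_{12})-\cos\theta\,(C+c_{13}),$$ and $\gamma(s)=\alpha(s)+y_1(s)T(s)+y_2(s)V(s)$. In either case assume $\gamma$ is regular. Then $\gamma$ is a general helix if and only if $\alpha$ is an isophote curve on $M$.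
   Context: $M$ is an oriented surface in Euclidean 3-space $E^3$ and $\alpha:I\to M$ is a unit-speed curve with arc-length parameter $s$. Its Darboux frame $\{T,V,U\}$ consists of the unit tangent $T=\alpha'$, the unit surface normal $U$ of $M$ along $\alpha$, and $V=U\times T$; it satisfies $T'=k_gV+k_nU$, $V'=-k_gT+\tau_gU$, $U'=-k_nT-\tau_gV$, where $k_g,k_n,\tau_g$ are the geodesic curvature, normal curvature and geodesic torsion. A regular curve is a general helix if its unit tangent makes a constant angle with a fixed direction. $\alpha$ is an isophote curve if $\langle U,l\rangle$ is constant for some fixed unit vector $l$. *)

From Stdlib Require Import Reals.
From Coquelicot Require Import Coquelicot.
Open Scope R_scope.

Record vec3 := mkV { vx : R; vy : R; vz : R }.

Definition vadd (u v : vec3) : vec3 := mkV (vx u + vx v) (vy u + vy v) (vz u + vz v).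
Definition vscale (a : R) (u : vec3) : vec3 := mkV (a * vx u) (a * vy u) (a * vz u).
Definition vdot (u v : vec3) : R := vx u * vx v + vy u * vy v + vz u * vz v.
Definition vnorm (u : vec3) : R := sqrt (vdot u u).
Definition vcross (u v : vec3) : vec3 :=
  mkV (vy u * vz v - vz u * vy v) (vz u * vx v - vx u * vz v) (vx u * vy v - vy u * vx v).
Definition vzero : vec3 := mkV 0 0 0.

Definition in_I (a b : Rbar) (s : R) : Prop := Rbar_lt a s /\ Rbar_lt s b.

Definition vderive (f : R -> vec3) (s : R) (d : vec3) : Prop :=
  is_derive (fun t => vx (f t)) s (vx d) /\
  is_derive (fun t => vy (f t)) s (vy d) /\
  is_derive (fun t => vz (f t)) s (vz d).

(* Darboux frame {T,V,U} of the unit-speed curve alpha on I, with U the unit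
   surface normal along alpha, V = U x T, and curvatures kg, kn, taug. *)
Definition darboux_frame (a b : Rbar) (alpha T V U : R -> vec3)
    (kg kn taug : R -> R) : Prop :=
  forall s, in_I a b s ->
    vderive alpha s (T s) /\
    vnorm (T s) = 1 /\ vnorm (U s) = 1 /\ vdot (U s) (T s) = 0 /\
    V s = vcross (U s) (T s) /\
    vderive T s (vadd (vscale (kg s) (V s)) (vscale (kn s) (U s))) /\
    vderive V s (vadd (vscale (- kg s) (T s)) (vscale (taug s) (U s))) /\
    vderive U s (vadd (vscale (- kn s) (T s)) (vscale (- taug s) (V s))).

Definition regular_on (a b : Rbar) (gamma : R -> vec3) : Prop :=
  exists gamma' : R -> vec3, forall s, in_I a b s ->
    vderive gamma s (gamma' s) /\ gamma' s <> vzero.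

Definition general_helix (a b : Rbar) (gamma : R -> vec3) : Prop :=
  exists (gamma' : R -> vec3) (d : vec3) (c : R),
    vnorm d = 1 /\
    forall s, in_I a b s ->
      vderive gamma s (gamma' s) /\
      gamma' s <> vzero /\
      vdot (vscale (/ vnorm (gamma' s)) (gamma' s)) d = c.

Definition isophote (a b : Rbar) (U : R -> vec3) : Prop :=
  exists (l : vec3) (c : R), vnorm l = 1 /\
    forall s, in_I a b s -> vdot (U s) l = c.

Definition case_a (a b : Rbar) (alpha T V : R -> vec3) (kg : R -> R)
    (gamma : R -> vec3) : Prop :=
  exists c10 c11 : R, forall s, in_I a b s ->
    kg s = 0 /\
    gamma s = vadd (alpha s) (vadd (vscale (c10 - s) (T s)) (vscale c11 (V s))).

Definition case_b (a b : Rbar) (alpha T V : R -> vec3) (kg : R -> R)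
    (gamma : R -> vec3) : Prop :=
  exists (theta S C : R -> R) (c12 c13 : R), forall s, in_I a b s ->
    kg s <> 0 /\
    is_derive theta s (kg s) /\
    is_derive S s (sin (theta s)) /\
    is_derive C s (cos (theta s)) /\
    let y2 := c12 * cos (theta s) + c13 * sin (theta s)
              - S s * cos (theta s) + C s * sin (theta s) in
    let y1 := - sin (theta s) * (S s - c12) - cos (theta s) * (C s + c13) in
    gamma s = vadd (alpha s) (vadd (vscale y1 (T s)) (vscale y2 (V s))).

(* Along [gamma = alpha + y1 T + y2 V] the Darboux equations give
   [gamma' = (1 + y1' - kg y2) T + (y2' + kg y1) V + (y1 kn + y2 taug) U], and in
   both cases [(y1, y2)] kills the first two coefficients.  So [gamma' = g U] with
   [g] nowhere zero by regularity, and the unit tangent of [gamma] is [sign g * U].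
   A constant angle with [d] forces [|<U, d>|] to be constant; being continuous,
   [<U, d>] is then constant by the intermediate value theorem.  Conversely, if
   [<U, l> = c] then [<gamma, l>' = g c]; [g] need not be continuous, but as a
   nowhere vanishing derivative [g c] cannot change sign (Darboux), so
   [<sign g * U, l> = sign g * c] is constant. *)

From Stdlib Require Import Reals Lra Psatz Classical Ranalysis5.
From Coquelicot Require Import Coquelicot.
Open Scope R_scope.

Lemma sign_eq_of_mult_pos x y : 0 < x * y -> sign x = sign y.
Proof.
  intros Hxy.
  destruct (Rtotal_order x 0) as [Hx | [-> | Hx]].
  - rewrite !sign_eq_m1; [reflexivity | ..]; nra.
  - lra.
  - rewrite !sign_eq_1; [reflexivity | ..]; nra.
Qed.

Lemma sign_mul_abs x : sign x * Rabs x = x.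
Proof.
  destruct (Rtotal_order x 0) as [Hx | [-> | Hx]].
  - rewrite sign_eq_m1, Rabs_left; lra.
  - rewrite sign_0; ring.
  - rewrite sign_eq_1, Rabs_pos_eq; lra.
Qed.

Lemma Rabs_sign x : x <> 0 -> Rabs (sign x) = 1.
Proof.
  intros Hx. destruct (Rtotal_order x 0) as [H | [H | H]]; [| lra |].
  - rewrite sign_eq_m1 by lra. rewrite Rabs_left; lra.
  - rewrite sign_eq_1 by lra. rewrite Rabs_R1; lra.
Qed.

Lemma derive_ascent (h : R -> R) x l y : is_derive h x l -> 0 < (y - x) * l ->
  exists lam, 0 < lam <= 1 /\ h x < h (x + lam * (y - x)).
Proof.
  intros Hd Hl. apply is_derive_Reals in Hd.
  assert (Hyx : 0 < Rabs (y - x)) by (apply Rabs_pos_lt; intros E; rewrite E in Hl; lra).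
  assert (Hl0 : 0 < Rabs l) by (apply Rabs_pos_lt; intros E; rewrite E in Hl; lra).
  destruct (Hd _ Hl0) as [[delta Hdelta] Hq]; simpl in Hq.
  set (lam := Rmin 1 (delta / (2 * Rabs (y - x)))).
  assert (Hlam : 0 < lam <= 1).
  { split; [apply Rmin_pos; [lra | apply Rdiv_lt_0_compat; lra] | apply Rmin_l]. }
  assert (Hstep : lam * Rabs (y - x) < delta).
  { assert (Hle : lam <= delta / (2 * Rabs (y - x))) by apply Rmin_r.
    apply Rmult_le_compat_r with (r := Rabs (y - x)) in Hle; [| lra].
    replace (delta / (2 * Rabs (y - x)) * Rabs (y - x)) with (delta / 2) in Hle
      by (field; lra).
    lra. }
  set (k := lam * (y - x)).
  assert (Hk : k <> 0).
  { unfold k. apply Rmult_integral_contrapositive. split; [lra |].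
    intros E. rewrite E, Rabs_R0 in Hyx. lra. }
  specialize (Hq k Hk ltac:(unfold k; rewrite Rabs_mult, Rabs_pos_eq; lra)).
  (* the difference quotient is within [|l|] of [l], hence has the sign of [l] *)
  assert (Hql : 0 < (h (x + k) - h x) / k * l).
  { apply Rabs_def2 in Hq. destruct (Rlt_or_le 0 l).
    - rewrite Rabs_pos_eq in Hq; nra.
    - rewrite Rabs_left1 in Hq; nra. }
  assert (Hkl : 0 < k * l) by (unfold k; rewrite Rmult_assoc; apply Rmult_lt_0_compat; lra).
  exists lam. split; [exact Hlam |]. change (h x < h (x + k)).
  set (q := (h (x + k) - h x) / k) in *.
  assert (Hdiff : h (x + k) - h x = q * k) by (unfold q; field; exact Hk).
  assert (Hqkl : 0 < (q * l) * (k * l)) by (apply Rmult_lt_0_compat; assumption).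
  assert (Hqk : 0 < q * k) by nra.
  lra.
Qed.

(* Darboux: at a maximum point of [h] on [[x, y]] the derivative would let [h]
   climb further towards [x] or [y], unless it vanishes. *)
Lemma derive_pos_propagates (h h' : R -> R) x y : x <= y ->
  (forall t, x <= t <= y -> is_derive h t (h' t) /\ h' t <> 0) ->
  0 < h' x -> 0 < h' y.
Proof.
  intros Hxy Hd Hx.
  destruct (Rlt_or_le 0 (h' y)) as [Hy | Hy]; [exact Hy | exfalso].
  assert (Hy' : h' y < 0) by (destruct (Hd y ltac:(lra)); lra).
  destruct (continuity_ab_maj h x y Hxy) as [M [Hmax HM]].
  { intros t Ht. apply continuity_pt_filterlim, (ex_derive_continuous h).
    exists (h' t). apply Hd, Ht. }
  destruct (Hd M HM) as [HdM HnM].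
  assert (Hdir : exists e, x <= e <= y /\ 0 < (e - M) * h' M).
  { destruct (Rlt_or_le 0 (h' M)) as [Hp | Hn].
    - exists y. split; [lra |].
      apply Rmult_lt_0_compat; [| exact Hp].
      destruct (Req_dec M y) as [-> | NE]; lra.
    - exists x. split; [lra |].
      destruct (Req_dec M x) as [-> | NE]; [lra | nra]. }
  destruct Hdir as [e [He Hpos]].
  destruct (derive_ascent h M (h' M) e HdM Hpos) as [lam [Hlam Hup]].
  specialize (Hmax (M + lam * (e - M)) ltac:(nra)).
  lra.
Qed.

Lemma derive_sign_const (h h' : R -> R) x y : x <= y ->
  (forall t, x <= t <= y -> is_derive h t (h' t) /\ h' t <> 0) ->
  sign (h' x) = sign (h' y).
Proof.
  intros Hxy Hd. apply sign_eq_of_mult_pos.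
  (* multiplying [h] by [h' x] makes the derivative at [x] positive *)
  apply (derive_pos_propagates (fun t => h' x * h t) (fun t => h' x * h' t) x y Hxy).
  - intros t Ht. destruct (Hd t Ht) as [Hdt Hnt]. split.
    + apply is_derive_scal, Hdt.
    + apply Rmult_integral_contrapositive. split; [apply Hd; lra | exact Hnt].
  - destruct (Hd x ltac:(lra)) as [_ Hnx]. nra.
Qed.

Lemma continuous_sign_const (phi : R -> R) x y : x <= y ->
  (forall t, x <= t <= y -> continuity_pt phi t /\ phi t <> 0) ->
  sign (phi x) = sign (phi y).
Proof.
  intros Hxy Hc.
  destruct (Hc x ltac:(lra)) as [_ Hnx]. destruct (Hc y ltac:(lra)) as [_ Hny].
  apply sign_eq_of_mult_pos.
  destruct (Rlt_or_le 0 (phi x * phi y)) as [Hp | Hn]; [exact Hp | exfalso].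
  destruct (Req_dec x y) as [<- | Nxy]; [nra |].
  destruct (IVT_interv (fun t => - (phi x * phi t)) x y) as [z [Hz Hz0]].
  - intros t Ht. apply continuity_pt_opp, continuity_pt_scal, Hc, Ht.
  - lra.
  - nra.
  - assert (phi x * phi y <> 0) by (apply Rmult_integral_contrapositive; tauto). lra.
  - destruct (Hc z Hz) as [_ Hnz]. apply Hnz.
    apply (Rmult_eq_reg_l (phi x)); [lra | exact Hnx].
Qed.

Section OpenInterval.
Variables a b : Rbar.

Lemma in_I_locally s : in_I a b s -> locally s (in_I a b).
Proof.
  intros [Ha Hb].
  apply filter_and; [exact (open_Rbar_gt' s a Ha) | exact (open_Rbar_lt' s b Hb)].
Qed.

Lemma in_I_between x y t : in_I a b x -> in_I a b y -> x <= t <= y -> in_I a b t.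
Proof.
  intros [Hax _] [_ Hyb] [Hxt Hty]. split.
  - apply Rbar_lt_le_trans with x; [exact Hax | exact Hxt].
  - apply Rbar_le_lt_trans with y; [exact Hty | exact Hyb].
Qed.

Lemma const_on_I (f : R -> R) :
  (forall x y, in_I a b x -> in_I a b y -> x <= y -> f x = f y) ->
  exists c, forall s, in_I a b s -> f s = c.
Proof.
  intros Hf. destruct (classic (exists s0, in_I a b s0)) as [[s0 Hs0] | Hempty].
  - exists (f s0). intros s Hs. destruct (Rle_dec s s0) as [Hle | Hgt].
    + exact (Hf s s0 Hs Hs0 Hle).
    + symmetry. apply (Hf s0 s Hs0 Hs). lra.
  - exists 0. intros s Hs. exfalso. apply Hempty. exists s. exact Hs.
Qed.

Lemma continuous_sign_const_on_I (phi : R -> R) :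
  (forall s, in_I a b s -> continuity_pt phi s /\ phi s <> 0) ->
  forall x y, in_I a b x -> in_I a b y -> x <= y -> sign (phi x) = sign (phi y).
Proof.
  intros Hc x y Hx Hy Hxy. apply continuous_sign_const; [exact Hxy |].
  intros t Ht. apply Hc, (in_I_between x y); assumption.
Qed.

Lemma derive_sign_const_on_I (h h' : R -> R) :
  (forall s, in_I a b s -> is_derive h s (h' s) /\ h' s <> 0) ->
  forall x y, in_I a b x -> in_I a b y -> x <= y -> sign (h' x) = sign (h' y).
Proof.
  intros Hd x y Hx Hy Hxy. apply (derive_sign_const h); [exact Hxy |].
  intros t Ht. apply Hd, (in_I_between x y); assumption.
Qed.

End OpenInterval.

Lemma vdot_scale_l k u w : vdot (vscale k u) w = k * vdot u w.
Proof. unfold vdot, vscale; simpl; ring. Qed.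

Lemma vnorm_scale_unit k u : vnorm u = 1 -> vnorm (vscale k u) = Rabs k.
Proof.
  unfold vnorm. intros Hu.
  replace (vdot (vscale k u) (vscale k u)) with (k² * vdot u u)
    by (unfold vdot, vscale, Rsqr; simpl; ring).
  rewrite sqrt_mult_alt, Hu, Rmult_1_r by apply Rle_0_sqr.
  apply sqrt_Rsqr_abs.
Qed.

Lemma vscale_unit_neq0 k u : vnorm u = 1 -> k <> 0 -> vscale k u <> vzero.
Proof.
  intros Hu Hk E. apply Hk, Rabs_eq_0.
  rewrite <- (vnorm_scale_unit k u Hu), E. unfold vnorm, vdot; simpl.
  rewrite Rmult_0_l, !Rplus_0_r. exact sqrt_0.
Qed.

Lemma normalize_scale_unit k u : vnorm u = 1 -> k <> 0 ->
  vscale (/ vnorm (vscale k u)) (vscale k u) = vscale (sign k) u.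
Proof.
  intros Hu Hk. rewrite (vnorm_scale_unit k u Hu).
  replace (sign k) with (/ Rabs k * k).
  - unfold vscale; simpl; f_equal; ring.
  - rewrite <- (sign_mul_abs k) at 2. field. apply Rabs_no_R0, Hk.
Qed.

Lemma vderive_unique f s d1 d2 : vderive f s d1 -> vderive f s d2 -> d1 = d2.
Proof.
  intros (X1 & Y1 & Z1) (X2 & Y2 & Z2).
  apply is_derive_unique in X1, Y1, Z1, X2, Y2, Z2.
  destruct d1, d2; simpl in *; f_equal; congruence.
Qed.

Lemma vderive_ext_loc f g s d :
  locally s (fun t => f t = g t) -> vderive f s d -> vderive g s d.
Proof.
  intros Hfg (X & Y & Z).
  split; [| split]; (eapply is_derive_ext_loc; [| eassumption]);
    (eapply filter_imp; [| exact Hfg]); intros t ->; reflexivity.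
Qed.

Lemma vderive_vadd f g s df dg : vderive f s df -> vderive g s dg ->
  vderive (fun t => vadd (f t) (g t)) s (vadd df dg).
Proof.
  intros (Xf & Yf & Zf) (Xg & Yg & Zg).
  split; [| split]; apply (is_derive_plus (V := R_NormedModule)); assumption.
Qed.

Lemma vderive_vscale (k : R -> R) f s dk df : is_derive k s dk -> vderive f s df ->
  vderive (fun t => vscale (k t) (f t)) s (vadd (vscale dk (f s)) (vscale (k s) df)).
Proof.
  intros Hk (X & Y & Z).
  split; [| split]; apply (is_derive_mult k); auto; intros; apply Rmult_comm.
Qed.

Lemma vderive_vdot f s d l : vderive f s d -> is_derive (fun t => vdot (f t) l) s (vdot d l).
Proof.
  intros (X & Y & Z).
  replace (vdot d l) with (vx l * vx d + vy l * vy d + vz l * vz d) by (unfold vdot; ring).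
  assert (E : forall t, vx l * vx (f t) + vy l * vy (f t) + vz l * vz (f t) = vdot (f t) l)
    by (intros; unfold vdot; ring).
  apply (is_derive_ext _ _ _ _ E).
  repeat apply (is_derive_plus (V := R_NormedModule)); apply is_derive_scal; assumption.
Qed.

Lemma frame_offset_derive (alpha T V U : R -> vec3) (y1 y2 : R -> R) s kg kn tg dy1 dy2 :
  vderive alpha s (T s) ->
  vderive T s (vadd (vscale kg (V s)) (vscale kn (U s))) ->
  vderive V s (vadd (vscale (- kg) (T s)) (vscale tg (U s))) ->
  is_derive y1 s dy1 -> is_derive y2 s dy2 ->
  vderive (fun t => vadd (alpha t) (vadd (vscale (y1 t) (T t)) (vscale (y2 t) (V t)))) s
    (vadd (vscale (1 + dy1 - kg * y2 s) (T s))
      (vadd (vscale (dy2 + kg * y1 s) (V s)) (vscale (y1 s * kn + y2 s * tg) (U s)))).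
Proof.
  intros Dalpha DT DV Dy1 Dy2.
  refine (eq_rect _ (vderive _ s)
    (vderive_vadd _ _ _ _ _ Dalpha
      (vderive_vadd _ _ _ _ _ (vderive_vscale _ _ _ _ _ Dy1 DT)
        (vderive_vscale _ _ _ _ _ Dy2 DV))) _ _).
  unfold vadd, vscale; simpl; f_equal; ring.
Qed.

(* The offset [gamma = alpha + y1 T + y2 V] moves along the surface normal
   exactly when [(y1, y2)] solves this linear system. *)
Definition normal_offset (a b : Rbar) (alpha T V : R -> vec3) (kg : R -> R)
    (gamma : R -> vec3) : Prop :=
  exists y1 y2 : R -> R, forall s, in_I a b s ->
    is_derive y1 s (kg s * y2 s - 1) /\ is_derive y2 s (- kg s * y1 s) /\
    gamma s = vadd (alpha s) (vadd (vscale (y1 s) (T s)) (vscale (y2 s) (V s))).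

Lemma normal_offset_derive a b alpha T V U kg kn taug gamma :
  darboux_frame a b alpha T V U kg kn taug -> normal_offset a b alpha T V kg gamma ->
  exists g : R -> R, forall s, in_I a b s -> vderive gamma s (vscale (g s) (U s)).
Proof.
  intros Hframe [y1 [y2 Hoff]].
  exists (fun s => y1 s * kn s + y2 s * taug s). intros s Hs.
  destruct (Hframe s Hs) as (Dalpha & _ & _ & _ & _ & DT & DV & _).
  destruct (Hoff s Hs) as (Dy1 & Dy2 & _).
  apply (vderive_ext_loc
    (fun t => vadd (alpha t) (vadd (vscale (y1 t) (T t)) (vscale (y2 t) (V t))))).
  { eapply filter_imp; [| exact (in_I_locally a b s Hs)].
    intros t Ht. symmetry. apply Hoff, Ht. }
  refine (eq_rect _ (vderive _ s)
    (frame_offset_derive alpha T V U y1 y2 s _ _ _ _ _ Dalpha DT DV Dy1 Dy2) _ _).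
  unfold vadd, vscale; simpl; f_equal; ring.
Qed.

Lemma case_a_normal_offset a b alpha T V kg gamma :
  case_a a b alpha T V kg gamma -> normal_offset a b alpha T V kg gamma.
Proof.
  intros [c10 [c11 Hgamma]].
  exists (fun s => c10 - s), (fun _ => c11). intros s Hs.
  destruct (Hgamma s Hs) as [Hkg Heq]. rewrite Hkg.
  split; [| split; [| exact Heq]]; auto_derive; auto; ring.
Qed.

Lemma case_b_normal_offset a b alpha T V kg gamma :
  case_b a b alpha T V kg gamma -> normal_offset a b alpha T V kg gamma.
Proof.
  intros (theta & S & C & c12 & c13 & Hgamma).
  exists (fun s => - sin (theta s) * (S s - c12) - cos (theta s) * (C s + c13)),
         (fun s => c12 * cos (theta s) + c13 * sin (theta s)
                   - S s * cos (theta s) + C s * sin (theta s)).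
  intros s Hs. destruct (Hgamma s Hs) as (_ & Dtheta & DS & DC & Heq).
  split; [| split; [| exact Heq]]; auto_derive;
    try (repeat split; eexists; eassumption);
    replace (Derive (fun x => theta x) s) with (kg s)
      by (symmetry; exact (is_derive_unique _ _ _ Dtheta));
    replace (Derive (fun x => S x) s) with (sin (theta s))
      by (symmetry; exact (is_derive_unique _ _ _ DS));
    replace (Derive (fun x => C x) s) with (cos (theta s))
      by (symmetry; exact (is_derive_unique _ _ _ DC)).
  - pose proof (sin2_cos2 (theta s)). unfold Rsqr in *. nra.
  - ring.
Qed.

Section NormalVelocity.
Variables (a b : Rbar) (gamma U : R -> vec3) (g : R -> R).
Hypothesis gamma_velocity : forall s, in_I a b s -> vderive gamma s (vscale (g s) (U s)).
Hypothesis g_neq0 : forall s, in_I a b s -> g s <> 0.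
Hypothesis U_unit : forall s, in_I a b s -> vnorm (U s) = 1.
Hypothesis U_derivable : forall s, in_I a b s -> exists dU, vderive U s dU.

Lemma unit_velocity_dot s d : in_I a b s ->
  vdot (vscale (/ vnorm (vscale (g s) (U s))) (vscale (g s) (U s))) d
  = sign (g s) * vdot (U s) d.
Proof.
  intros Hs. rewrite normalize_scale_unit by auto. apply vdot_scale_l.
Qed.

Lemma U_dot_continuous d s : in_I a b s -> continuity_pt (fun t => vdot (U t) d) s.
Proof.
  intros Hs. destruct (U_derivable s Hs) as [dU DU].
  apply continuity_pt_filterlim, (ex_derive_continuous (fun t => vdot (U t) d)).
  exists (vdot dU d). exact (vderive_vdot U s dU d DU).
Qed.

Lemma isophote_of_helix : general_helix a b gamma -> isophote a b U.
Proof.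
  intros (gamma' & d & c & Hd & Hhelix).
  assert (Hdot : forall s, in_I a b s -> sign (g s) * vdot (U s) d = c).
  { intros s Hs. destruct (Hhelix s Hs) as (Dgamma & _ & Hc).
    rewrite (vderive_unique _ _ _ _ Dgamma (gamma_velocity s Hs)), unit_velocity_dot in Hc
      by exact Hs.
    exact Hc. }
  assert (Habs : forall s, in_I a b s -> Rabs (vdot (U s) d) = Rabs c).
  { intros s Hs. rewrite <- (Hdot s Hs), Rabs_mult, Rabs_sign by exact (g_neq0 s Hs). ring. }
  assert (Hneq0 : c <> 0 -> forall s, in_I a b s -> vdot (U s) d <> 0).
  { intros Hc s Hs E. apply Hc, Rabs_eq_0. rewrite <- (Habs s Hs), E. apply Rabs_R0. }
  destruct (const_on_I a b (fun s => vdot (U s) d)) as [c' Hc'].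
  - intros x y Hx Hy Hxy.
    rewrite <- (sign_mul_abs (vdot (U x) d)), <- (sign_mul_abs (vdot (U y) d)),
      (Habs x Hx), (Habs y Hy).
    destruct (Req_dec c 0) as [-> | Hc]; [rewrite Rabs_R0; ring |].
    f_equal. apply (continuous_sign_const_on_I a b (fun t => vdot (U t) d)); [| assumption..].
    intros s Hs. split; [apply U_dot_continuous, Hs | apply Hneq0; assumption].
  - exists d, c'. split; assumption.
Qed.

Lemma helix_of_isophote : isophote a b U -> general_helix a b gamma.
Proof.
  intros (l & c & Hl & Hiso).
  destruct (const_on_I a b (fun s => sign (g s) * c)) as [c' Hc'].
  - intros x y Hx Hy Hxy.
    destruct (Req_dec c 0) as [-> | Hc]; [ring |].
    assert (Hd : forall s, in_I a b s ->
      is_derive (fun t => vdot (gamma t) l) s (g s * c) /\ g s * c <> 0).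
    { intros s Hs. split.
      - rewrite <- (Hiso s Hs), <- vdot_scale_l. apply vderive_vdot, gamma_velocity, Hs.
      - apply Rmult_integral_contrapositive. split; [apply g_neq0, Hs | exact Hc]. }
    pose proof (derive_sign_const_on_I a b _ (fun s => g s * c) Hd x y Hx Hy Hxy) as Hsign.
    cbv beta in Hsign. rewrite !sign_mult in Hsign.
    apply Rmult_eq_compat_r, (Rmult_eq_reg_r (sign c)); [exact Hsign | apply sign_neq_0, Hc].
  - exists (fun s => vscale (g s) (U s)), l, c'. split; [exact Hl |].
    intros s Hs. split; [apply gamma_velocity, Hs |].
    split; [apply vscale_unit_neq0; auto |].
    rewrite unit_velocity_dot, Hiso by exact Hs. apply Hc', Hs.
Qed.

End NormalVelocity.

Theorem theorem3p30 (a b : Rbar) (alpha T V U : R -> vec3) (kg kn taug : R -> R)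
    (gamma : R -> vec3) :
  darboux_frame a b alpha T V U kg kn taug ->
  (case_a a b alpha T V kg gamma \/ case_b a b alpha T V kg gamma) ->
  regular_on a b gamma ->
  (general_helix a b gamma <-> isophote a b U).
Proof.
  intros Hframe Hcase [gamma' Hregular].
  assert (Hoffset : normal_offset a b alpha T V kg gamma)
    by (destruct Hcase; [apply case_a_normal_offset | apply case_b_normal_offset]; assumption).
  destruct (normal_offset_derive _ _ _ _ _ _ _ _ _ _ Hframe Hoffset) as [g Hvelocity].
  assert (Hg : forall s, in_I a b s -> g s <> 0).
  { intros s Hs E. destruct (Hregular s Hs) as [Dgamma Hneq0]. apply Hneq0.
    rewrite (vderive_unique _ _ _ _ Dgamma (Hvelocity s Hs)), E.
    unfold vscale, vzero; simpl. f_equal; ring. }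
  assert (HU : forall s, in_I a b s -> vnorm (U s) = 1 /\ exists dU, vderive U s dU).
  { intros s Hs. destruct (Hframe s Hs) as (_ & _ & HU & _ & _ & _ & _ & DU).
    split; [exact HU | eexists; exact DU]. }
  split.
  - apply isophote_of_helix with g; auto; apply HU.
  - apply helix_of_isophote with g; auto; apply HU.
Qed.
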